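(* Protocol P1 (described in the context) perfectly constructs (i.e. $0$-constructs) the Single-Plane Remote State Preparation resource SP-RSP from one use of the Remote Rotation with Dephasing resource $\mathrm{RR}_\mathrm{D}$, in the Abstract Cryptography framework.
   Context: Notation: $\Theta=\{k\pi/4 : k=0,\dots,7\}$; for $\theta\in\Theta$, $|+_\theta\rangle=(|0\rangle+e^{i\theta}|1\rangle)/\sqrt2$; $R_Z(\theta)=\mathrm{diag}(1,e^{i\theta})$ (so $R_Z(\theta)|+\rangle=|+_\theta\rangle$); $X$ is the Pauli bit flip. For a map $C$ and state $\rho$, $C(\rho)$ denotes $C\rho C^\dagger$. Abstract Cryptography (AC) framework (two parties: a Sender, always assumed honest, and a Receiver). A resource is a system with an interface for each party which receives (classical or quantum) inputs at its interfaces, applies a specified CPTP map, and returns outputs at interfaces; a filtered interface is one accessible only to a dishonest party. A protocol $\pi=(\pi_S,\pi_R)$ consists of converters (sequences of CPTP maps describing the honest parties' actions) plugged into the interfaces of the available resource $\mathcal R$, giving a new resource $\pi\mathcal R$. A distinguisher is an unbounded system that interacts with all outer interfaces of a resource (adaptively) and outputs a bit. Two resources $\mathcal R_1,\mathcal R_2$ with the same interfaces are $\epsilon$-indistinguishable, $\mathcal R_1\approx_\epsilon\mathcal R_2$, if for every distinguisher $\mathcal D$, $|\Pr[\mathcal D\mathcal R_1=1]-\Pr[\mathcal D\mathcal R_2=1]|\le\epsilon$. A protocol $\pi$ $\epsilon$-constructs resource $\mathcal S$ from resource $\mathcal R$ if (1) correctness: $\pi\mathcal R\approx_\epsilon\mathcal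 S$, and (2) security against a malicious Receiver: there exists a converter (simulator) $\sigma$ plugged into the Receiver's interface of $\mathcal S$ such that $\pi_S\mathcal R\approx_\epsilon \mathcal S\sigma$. ''Perfectly constructs'' means $\epsilon=0$. Resource SP-RSP: the Sender inputs $\theta\in\Theta$; the resource sends a qubit in state $|+_\theta\rangle$ to the Receiver. Resource $\mathrm{RR}_\mathrm{D}$: the Sender inputs $\theta\in\Theta$; the Receiver inputs a single qubit in state $\rho$; the resource samples $b\in\{0,1\}$ uniformly at random and outputs the qubit $R_Z(\theta)X^b(\rho)$ to the Receiver. Protocol P1: the Sender inputs $\theta$ into $\mathrm{RR}_\mathrm{D}$; the honest Receiver inputs a qubit in state $|+\rangle$ into $\mathrm{RR}_\mathrm{D}$ and sets the qubit returned by $\mathrm{RR}_\mathrm{D}$ as its output. *)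

(* Quantum states/operators are matrices over algC
   (algebraic complex numbers, which contain all the amplitudes needed:
   1/sqrt 2 and the 8th roots of unity e^{i k pi/4}). *)
From HB Require Import structures.
From mathcomp Require Import all_boot all_order all_algebra all_field.
Set Implicit Arguments. Unset Strict Implicit. Unset Printing Implicit Defensive.
Import Order.TTheory GRing.Theory Num.Theory.
Local Open Scope ring_scope.

Definition adjmx {m n} (A : 'M[algC]_(m, n)) : 'M[algC]_(n, m) :=
  (map_mx (fun x => x^*) A)^T.

(* positive semidefinite: <v, A v> >= 0 for all v (in algC, "0 <= z" means z is
   a nonnegative real) *)
Definition psd {n} (A : 'M[algC]_n) : Prop :=
  forall v : 'cV[algC]_n, 0 <= (adjmx v *m A *m v) 0 0.

Definition proj {n} (v : 'cV[algC]_n) : 'M[algC]_n := v *m adjmx v.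

(* tensor-product indexing: 'I_(m*n) <-> 'I_m * 'I_n, matching mxvec_index *)
Definition idx_pair {m n} (p : 'I_(m * n)) : 'I_m * 'I_n :=
  enum_val (cast_ord (esym (mxvec_cast m n)) p).

(* Kronecker product A (x) B, first factor = "outer" index *)
Definition tens {m n} (A : 'M[algC]_m) (B : 'M[algC]_n) : 'M[algC]_(m * n) :=
  \matrix_(p, q) (A (idx_pair p).1 (idx_pair q).1 * B (idx_pair p).2 (idx_pair q).2).

Definition block {k m} (s : 'M[algC]_(k * m)) (i j : 'I_k) : 'M[algC]_m :=
  \matrix_(a, b) s (mxvec_index i a) (mxvec_index j b).

(* id_k (x) Phi, for a linear map Phi : L(C^m) -> L(C^n), applied blockwise *)
Definition ext {k m n} (Phi : 'M[algC]_m -> 'M[algC]_n) (s : 'M[algC]_(k * m))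
  : 'M[algC]_(k * n) :=
  \matrix_(p, q) (Phi (block s (idx_pair p).1 (idx_pair q).1))
                   (idx_pair p).2 (idx_pair q).2.

Definition kraus {m n} (Ks : seq 'M[algC]_(n, m)) (rho : 'M[algC]_m) : 'M[algC]_n :=
  \sum_(K <- Ks) (K *m rho *m adjmx K).
Definition trace_preserving {m n} (Ks : seq 'M[algC]_(n, m)) : Prop :=
  \sum_(K <- Ks) (adjmx K *m K) = 1%:M.

(* theta = k*pi/4 is encoded by k : 'I_8;  e^{i pi/4} = (1 + i)/sqrt 2 *)
Definition omega : algC := (1 + 'i) / sqrtC 2.
Definition phase (k : 'I_8) : algC := omega ^+ k.

Definition ket_plus (k : 'I_8) : 'cV[algC]_2 :=
  (sqrtC 2)^-1 *: \col_(i < 2) (if i == 0 then 1 else phase k).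
Definition RZ (k : 'I_8) : 'M[algC]_2 :=
  diag_mx (\row_(i < 2) (if i == 0 then 1 else phase k)).
Definition PX : 'M[algC]_2 := \matrix_(i < 2, j < 2) (i != j)%:R.

(* ---------- one-round resources ----------
   A resource of the kind considered here has: a classical Sender input
   theta in Theta (encoded as 'I_8), a quantum Receiver input of dimension m
   (m = 1 means "no input"), and a qubit output at the Receiver interface.
   It is described by the map theta |-> (CPTP map L(C^m) -> L(C^2)). *)
Definition res (m : nat) := 'I_8 -> 'M[algC]_m -> 'M[algC]_2.

Definition SPRSP : res 1 := fun k rho => \tr rho *: proj (ket_plus k).

Definition RRD : res 2 := fun k rho =>
  2^-1 *: (RZ k *m rho *m adjmx (RZ k)
           + (RZ k *m PX) *m rho *m adjmx (RZ k *m PX)).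

(* Protocol P1.  pi_S : forward theta to RR_D unchanged.
   pi_R : input a fresh |+> = |+_0> into RR_D and output the returned qubit
   (the outer Receiver interface of pi R has no input, i.e. dimension 1). *)
Definition piS (R : res 2) : res 2 := fun k rho => R k rho.
Definition piR (R : res 2) : res 1 := fun k rho => R k (\tr rho *: proj (ket_plus 0)).
Definition P1_real : res 1 := piR (piS RRD).

(* S sigma: a simulator at the Receiver interface of SP-RSP, receiving the
   distinguisher's qubit rho and the qubit output by SP-RSP, and applying a
   CPTP map (Kraus operators Ks) to rho (x) output. *)
Definition with_sim (S : res 1) (Ks : seq 'M[algC]_(2, 2 * 2)) : res 2 :=
  fun k rho => kraus Ks (tens rho (S k 1%:M)).

(* ---------- distinguishers ----------
   A distinguisher keeps a reference system of arbitrary finite dimension r,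
   produces a classical-quantum state  sum_theta |theta><theta| (x) sigma_theta
   (sigma_theta on ref (x) Receiver input, PSD, total trace 1), feeds theta and
   the input part to the resource, and then measures theta, the reference and
   the output with a two-outcome POVM {E_theta, 1 - E_theta}. *)
Record distinguisher (m : nat) := Distinguisher {
  d_ref : nat;
  d_state : 'I_8 -> 'M[algC]_(d_ref * m);
  d_eff : 'I_8 -> 'M[algC]_(d_ref * 2) }.

Definition valid_dist {m} (D : distinguisher m) : Prop :=
  (forall k, psd (d_state D k)) /\ \sum_k \tr (d_state D k) = 1 /\
  (forall k, psd (d_eff D k)) /\ (forall k, psd (1%:M - d_eff D k)).

Definition accept {m} (D : distinguisher m) (R : res m) : algC :=
  \sum_k \tr (d_eff D k *m ext (R k) (d_state D k)).

Definition indist {m} (R1 R2 : res m) (eps : algC) : Prop :=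
  forall D : distinguisher m, valid_dist D ->
    `|accept D R1 - accept D R2| <= eps.

(* On the honest side, R_Z(theta)|+> = |+_theta> and X|+> = |+>, so the random
   X^b applied by RR_D is invisible on the input |+> and P1 outputs exactly
   |+_theta>.  Against a malicious Receiver, the simulator applies a CNOT from
   the Receiver's qubit onto the |+_theta> produced by SP-RSP, measures the
   target with outcome b and applies X^b to the remaining qubit; outcome b
   acts on the Receiver's qubit as R_Z(theta) X^b / sqrt 2, which is exactly
   RR_D.  In both cases the two resources define the same maps, so no
   distinguisher has any advantage. *)
From mathcomp Require Import all_boot all_order all_algebra all_field ring.
Set Implicit Arguments. Unset Strict Implicit. Unset Printing Implicit Defensive.
Import GRing.Theory Num.Theory.
Local Open Scope ring_scope.

Lemma ord2P (i : 'I_2) : i = 0 \/ i = 1.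
Proof. by case: i => [[|[|//]] ?]; [left | right]; apply: val_inj. Qed.

Lemma big_ord2 (V : nmodType) (F : 'I_2 -> V) : \sum_(i < 2) F i = F 0 + F 1.
Proof. by rewrite big_ord_recr big_ord1; congr (F _ + F _); apply: val_inj. Qed.

Lemma idx_pairK m n (i : 'I_m) (j : 'I_n) : idx_pair (mxvec_index i j) = (i, j).
Proof. by rewrite /idx_pair /mxvec_index cast_ordK enum_rankK. Qed.

Lemma mxvec_index_eq m n (i i' : 'I_m) (j j' : 'I_n) :
  (mxvec_index i j == mxvec_index i' j') = ((i, j) == (i', j')).
Proof.
by apply/eqP/eqP => [eq_ij | [-> ->]] //; rewrite -idx_pairK eq_ij idx_pairK.
Qed.

Lemma big_mxvec_index (V : nmodType) m n (F : 'I_(m * n) -> V) :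
  \sum_(p < m * n) F p = \sum_(i < m) \sum_(j < n) F (mxvec_index i j).
Proof.
rewrite pair_bigA /= (reindex _ (curry_mxvec_bij m n)) /=.
by apply: eq_bigr => -[].
Qed.

Lemma adjmxM m n p (A : 'M[algC]_(m, n)) (B : 'M[algC]_(n, p)) :
  adjmx (A *m B) = adjmx B *m adjmx A.
Proof. by rewrite /adjmx map_mxM trmx_mul. Qed.

Lemma adjmxZ m n c (A : 'M[algC]_(m, n)) : adjmx (c *: A) = c^* *: adjmx A.
Proof. by rewrite /adjmx map_mxZ linearZ. Qed.

Lemma proj_mulmx m n (A : 'M[algC]_(m, n)) (v : 'cV_n) :
  proj (A *m v) = A *m proj v *m adjmx A.
Proof. by rewrite /proj adjmxM !mulmxA. Qed.

Lemma conj_mulmxZ m n c (A : 'M[algC]_(m, n)) (rho : 'M_n) :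
  (c *: A) *m rho *m adjmx (c *: A) = `|c| ^+ 2 *: (A *m rho *m adjmx A).
Proof. by rewrite adjmxZ -!scalemxAl -scalemxAr scalerA normCK. Qed.

Definition id_tens_ket m n (w : 'cV[algC]_n) : 'M[algC]_(m * n, m) :=
  \matrix_(p, a) (((idx_pair p).1 == a)%:R * w (idx_pair p).2 0).

Lemma id_tens_ket_mulmx m n (w : 'cV_n) l (A : 'M_(m, l)) p b :
  (id_tens_ket m w *m A) p b = w (idx_pair p).2 0 * A (idx_pair p).1 b.
Proof.
rewrite mxE (bigD1 (idx_pair p).1) //= big1 ?addr0 => [|a /negbTE a_neq].
  by rewrite mxE eqxx mul1r.
by rewrite mxE eq_sym a_neq !mul0r.
Qed.

Lemma mulmx_adj_id_tens_ket m n (w : 'cV_n) l (A : 'M_(l, m)) a q :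
  (A *m adjmx (id_tens_ket m w)) a q = A a (idx_pair q).1 * (w (idx_pair q).2 0)^*.
Proof.
rewrite mxE (bigD1 (idx_pair q).1) //= big1 ?addr0 => [|b /negbTE b_neq].
  by rewrite !mxE eqxx mul1r.
by rewrite !mxE eq_sym b_neq mul0r rmorph0 mulr0.
Qed.

Lemma tens_proj m n (rho : 'M_m) (w : 'cV_n) :
  tens rho (proj w) = id_tens_ket m w *m rho *m adjmx (id_tens_ket m w).
Proof.
apply/matrixP => p q.
rewrite -mulmxA id_tens_ket_mulmx mulmx_adj_id_tens_ket !mxE big_ord1 !mxE.
by rewrite mulrCA mulrA.
Qed.

Lemma kraus_tens_proj l m n (Ks : seq 'M_(l, m * n)) rho (w : 'cV_n) :
  kraus Ks (tens rho (proj w)) = kraus [seq K *m id_tens_ket m w | K <- Ks] rho.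
Proof.
rewrite /kraus big_map tens_proj; apply: eq_bigr => K _.
by rewrite adjmxM !mulmxA.
Qed.

Lemma indist0_eq m (R1 R2 : res m) :
  (forall k rho, R1 k rho = R2 k rho) -> indist R1 R2 0.
Proof.
move=> eq_R D _; suff -> : accept D R1 = accept D R2 by rewrite subrr normr0.
apply: eq_bigr => k _; congr (\tr (_ *m _)).
by apply/matrixP => p q; rewrite !mxE eq_R.
Qed.

Lemma phase0 : phase 0 = 1.
Proof. by rewrite /phase expr0. Qed.

Lemma RZ_ket_plus0 k : RZ k *m ket_plus 0 = ket_plus k.
Proof.
rewrite /ket_plus -scalemxAr phase0; congr (_ *: _).
apply/matrixP => i j; rewrite !mxE big_ord2 !mxE /= !mulr1.
by case: (ord2P i) => ->; rewrite /= ?mulr0n ?mulr1n ?addr0 ?add0r.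
Qed.

Lemma PX_ket_plus0 : PX *m ket_plus 0 = ket_plus 0.
Proof.
rewrite /ket_plus -scalemxAr phase0; congr (_ *: _).
apply/matrixP => i j; rewrite !mxE big_ord2 !mxE /= !mulr1.
by case: (ord2P i) => ->; rewrite /= ?mulr0n ?mulr1n ?addr0 ?add0r.
Qed.

Lemma RRDZ k c rho : RRD k (c *: rho) = c *: RRD k rho.
Proof. by rewrite /RRD -!scalemxAr -!scalemxAl -scalerDr !scalerA mulrC. Qed.

Lemma RRD_ket_plus0 k : RRD k (proj (ket_plus 0)) = proj (ket_plus k).
Proof.
rewrite /RRD -!proj_mulmx -mulmxA PX_ket_plus0 RZ_ket_plus0.
by rewrite -mulr2n -scaler_nat scalerA mulVf ?pnatr_eq0 ?scale1r.
Qed.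

Lemma P1_realE k rho : P1_real k rho = SPRSP k rho.
Proof. by rewrite /P1_real /piR /piS RRDZ RRD_ket_plus0. Qed.

(* sim_keep and sim_flip are X^b (1 (x) <b|) CNOT for b = 0, 1: they map
   |a, a> to |a> and |a, 1 - a> to |1 - a> respectively. *)
Definition sim_keep : 'M[algC]_(2, 2 * 2) := \matrix_(a, p)
  ((a == (idx_pair p).1) && ((idx_pair p).2 == (idx_pair p).1))%:R.
Definition sim_flip : 'M[algC]_(2, 2 * 2) := \matrix_(a, p)
  ((a != (idx_pair p).1) && ((idx_pair p).2 != (idx_pair p).1))%:R.

Lemma sim_trace_preserving : trace_preserving [:: sim_keep; sim_flip].
Proof.
rewrite /trace_preserving big_cons big_seq1 /adjmx.
apply/matrixP => p q; rewrite !mxE !big_ord2 !mxE.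
case/mxvec_indexP: p => i j; case/mxvec_indexP: q => i' j'.
rewrite !idx_pairK mxvec_index_eq /=.
by case: (ord2P i) => ->; case: (ord2P j) => ->; case: (ord2P i') => ->;
  case: (ord2P j') => -> /=; rewrite ?conjC0 ?conjC1; ring.
Qed.

Lemma sim_keep_id_tens_ket k :
  sim_keep *m id_tens_ket 2 (ket_plus k) = (sqrtC 2)^-1 *: RZ k.
Proof.
apply/matrixP => a b; rewrite !mxE big_mxvec_index !big_ord2 !mxE !idx_pairK /=.
by case: (ord2P a) => ->; case: (ord2P b) => -> /=; rewrite ?mulr0n ?mulr1n; ring.
Qed.

Lemma sim_flip_id_tens_ket k :
  sim_flip *m id_tens_ket 2 (ket_plus k) = (sqrtC 2)^-1 *: (RZ k *m PX).
Proof.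
apply/matrixP => a b; rewrite !mxE big_mxvec_index !big_ord2 !mxE !idx_pairK /=.
by case: (ord2P a) => ->; case: (ord2P b) => -> /=; rewrite ?mulr0n ?mulr1n; ring.
Qed.

Lemma normC_invsqrt2 : `|(sqrtC 2)^-1| ^+ 2 = 2^-1 :> algC.
Proof. by rewrite normfV ger0_norm ?sqrtC_ge0 // exprVn sqrtCK. Qed.

Lemma with_sim_SPRSP k rho :
  with_sim SPRSP [:: sim_keep; sim_flip] k rho = RRD k rho.
Proof.
rewrite /with_sim /SPRSP mxtrace1 scale1r kraus_tens_proj /kraus /= big_cons big_seq1.
by rewrite sim_keep_id_tens_ket sim_flip_id_tens_ket !conj_mulmxZ normC_invsqrt2 -scalerDr.
Qed.

Theorem theorem1 :
  indist P1_real SPRSP 0 /\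
  exists Ks : seq 'M[algC]_(2, 2 * 2),
    trace_preserving Ks /\ indist (piS RRD) (with_sim SPRSP Ks) 0.
Proof.
split; first exact: indist0_eq P1_realE.
exists [:: sim_keep; sim_flip]; split; first exact: sim_trace_preserving.
by apply: indist0_eq => k rho; rewrite with_sim_SPRSP.
Qed.
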